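(* In the Lie algebra $\mathcal W=\mathcal W(\ell_1,\ell_2,\ell_3,\Gamma)$, the centralizer $\{u\in\mathcal W\mid [u,x^{\alpha}]=0\ \text{for all }\alpha\in\Gamma\}$ of the elements $x^\alpha=x^{\alpha,0}$ equals $\mathcal A[\mathcal D_1]=\mathrm{span}\{x^{\alpha,\vec i}\partial^\mu\mid(\alpha,\vec i)\in\Gamma\times J_1,\ \mu\in\mathbb N^{\ell_1}\times\{0\}^{\ell_2+\ell_3}\}$.
   Context: $\mathbb F$ is a field of characteristic $0$; $\mathbb N=\{0,1,2,\dots\}$. Let $\ell_1,\ell_2,\ell_3\in\mathbb N$ with $\ell=\ell_1+\ell_2+\ell_3>0$, and let $\Gamma$ be an additive subgroup of $\mathbb F^{\ell_2+\ell_3}$ containing an $\mathbb F$-basis of $\mathbb F^{\ell_2+\ell_3}$. Elements $\alpha\in\Gamma$ are written $\alpha=(\alpha_1,\dots,\alpha_\ell)$ with $\alpha_1=\dots=\alpha_{\ell_1}=0$. Let $J=\mathbb N^\ell$, $J_1=\mathbb N^{\ell_1+\ell_2}\times\{0\}^{\ell_3}$; $1_{[p]}$ is the $p$-th unit vector. $\mathcal A=\mathbb F[\Gamma\times J_1]$ has basis $x^{\alpha,\vec i}$ with $x^{\alpha,\vec i}x^{\beta,\vec j}=x^{\alpha+\beta,\vec i+\vec j}$ (out-of-range symbols read as $0$); derivations $\partial_p(x^{\alpha,\vec i})=\alpha_px^{\alpha,\vec i}+i_px^{\alpha,\vec i-1_{[p]}}$, $1\le p\le\ell$; $\mathcal D=\mathrm{span}\{\partial_p\}$,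 $\mathcal D_1=\mathrm{span}\{\partial_1,\dots,\partial_{\ell_1}\}$. $\mathcal W=\mathcal A\otimes\mathbb F[\mathcal D]$ has basis $x^{\alpha,\vec i}\partial^\mu$ ($\mu\in J$) and associative product $u\partial^\mu\cdot v\partial^\nu=\sum_{\lambda\in J}\binom{\mu}{\lambda}u\,\partial^\lambda(v)\,\partial^{\mu+\nu-\lambda}$ ($u,v\in\mathcal A$), with Lie bracket the commutator. *)

From HB Require Import structures.
From mathcomp Require Import all_boot all_order all_algebra.
Set Implicit Arguments. Unset Strict Implicit. Unset Printing Implicit Defensive.
Import Order.TTheory GRing.Theory Num.Theory.
Local Open Scope ring_scope.

(* The Lie algebra W(l1,l2,l3,Gamma) = A (x) F[D], realised as the free
   F-vector space on the basis symbols x^{alpha,i} d^mu.  An element is a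
   finite formal linear combination (a list of (coefficient, basis symbol));
   two lists denote the same element iff all coefficients [coefW] agree.
   Indices p = 1..l are 'I_(l1 + (l2 + l3)) (0-based). *)

Section WDefs.
Variables (F : fieldType) (l1 l2 l3 : nat).
Local Notation L := (l1 + (l2 + l3))%N.

Definition multi := {ffun 'I_L -> nat}.
(* basis symbol x^{alpha,i} of A : alpha in F^{l2+l3}, i in N^l *)
Definition keyA := ('rV[F]_(l2 + l3) * multi)%type.
(* basis symbol x^{alpha,i} d^mu of W *)
Definition keyW := (keyA * multi)%type.
Definition termA := (F * keyA)%type.
Definition termW := (F * keyW)%type.

(* alpha written as an l-tuple with its first l1 coordinates 0 *)
Definition extG (a : 'rV[F]_(l2 + l3)) (p : 'I_L) : F :=
  row_mx (0 : 'rV[F]_l1) a 0 p.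

Definition unitm (p : 'I_L) : multi := [ffun q => if q == p then 1%N else 0%N].
Definition addm (i j : multi) : multi := [ffun q => (i q + j q)%N].
Definition subm (i j : multi) : multi := [ffun q => (i q - j q)%N].
Definition zerom : multi := [ffun => 0%N].

(* d_p (x^{alpha,i}) = alpha_p x^{alpha,i} + i_p x^{alpha,i-1_[p]}
   (when i_p = 0 the second term has coefficient 0) *)
Definition dA (p : 'I_L) (a : seq termA) : seq termA :=
  flatten [seq [:: (t.1 * extG t.2.1 p, t.2);
                   (t.1 * (t.2.2 p)%:R, (t.2.1, subm t.2.2 (unitm p)))] | t : termA <- a].

Definition dpow (lam : multi) (a : seq termA) : seq termA :=
  foldr (fun p b => iter (lam p) (dA p) b) a (enum 'I_L).

Definition mulA (a b : seq termA) : seq termA :=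
  flatten [seq [seq (s.1 * t.1, (s.2.1 + t.2.1, addm s.2.2 t.2.2)) | t : termA <- b]
          | s : termA <- a].

(* all lambda in J with lambda <= mu (the only lambda with binom(mu,lambda) <> 0) *)
Definition box (mu : multi) : seq multi :=
  [seq lam : multi <- [seq ([ffun p => nat_of_ord (t p)] : multi)
              | t : {ffun 'I_L -> 'I_(\max_(p < L) mu p).+1}]
  | [forall p, lam p <= mu p]%N].

Definition binm (mu lam : multi) : nat := (\prod_(p < L) 'C(mu p, lam p))%N.

(* u d^mu . v d^nu = sum_lambda binom(mu,lambda) u d^lambda(v) d^{mu+nu-lambda} *)
Definition mulW (u v : seq termW) : seq termW :=
  flatten (flatten [seq [seq
     [seq ((binm s.2.2 lam)%:R * w.1, (w.2, subm (addm s.2.2 t.2.2) lam))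
       | w : termA <- mulA [:: (s.1, s.2.1)] (dpow lam [:: (t.1, t.2.1)])]
     | lam <- box s.2.2] | s : termW <- u, t : termW <- v]).

Definition brW (u v : seq termW) : seq termW :=
  mulW u v ++ [seq (- t.1, t.2) | t : termW <- mulW v u].

Definition coefW (u : seq termW) (k : keyW) : F :=
  \sum_(t <- (u : seq termW) | t.2 == k) t.1.

Definition validA (G : {pred 'rV[F]_(l2 + l3)}) (k : keyA) : bool :=
  (k.1 \in G) && [forall p : 'I_L, (l1 + l2 <= p)%N ==> (k.2 p == 0%N)].

Definition inW G (u : seq termW) : bool := all (fun t : termW => validA G t.2.1) u.

Definition inAD1 G (v : seq termW) : bool :=
  all (fun t : termW => validA G t.2.1 &&
                [forall p : 'I_L, (l1 <= p)%N ==> (t.2.2 p == 0%N)]) v.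

Definition xpow (a : 'rV[F]_(l2 + l3)) : seq termW := [:: (1, ((a, zerom), zerom))].

End WDefs.

From Pilot Require Import Defs.
From HB Require Import structures.
From mathcomp Require Import all_boot all_order all_algebra.
From mathcomp Require Import ring.
Set Implicit Arguments. Unset Strict Implicit. Unset Printing Implicit Defensive.
Import Order.TTheory GRing.Theory Num.Theory.
Local Open Scope ring_scope.

(* By the product formula, [x^{beta,j} d^mu, x^alpha] is the sum over
   0 <> lam <= mu of binom(mu,lam) alpha^lam x^{beta+alpha,j} d^{mu-lam}.  Since
   alpha vanishes on its first l1 coordinates, alpha^lam = 0 unless lam avoids
   D1, so A[D1] centralizes every x^alpha.  Conversely, let u centralize all
   x^alpha and pick a term of maximal positive order outside D1, say
   x^{beta,j} d^{nu+1_p}.  At x^{beta+alpha,j} d^nu the bracket [u, x^alpha]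
   only sees the terms x^{beta,j} d^{nu+1_q}, and its coefficient there is the
   linear form sum_q (nu_q+1) c_q alpha_q in alpha.  It vanishes on a basis of
   Gamma, so all (nu_q+1) c_q vanish, and c_p = 0 in characteristic 0.  A
   descending induction on the order removes all terms outside A[D1]. *)

Lemma sum_if_eq_seq (R : nmodType) (T : eqType) (r : seq T) (x : T) (c : R) :
  uniq r -> \sum_(j <- r) (if x == j then c else 0) = if x \in r then c else 0.
Proof.
move=> ur; case: ifP => xr.
  rewrite (bigD1_seq x) //= eqxx big1 ?addr0 // => j /negPf.
  by rewrite eq_sym => ->.
by rewrite big1_seq // => j /andP [_ jr]; case: eqP => // e; rewrite e jr in xr.
Qed.

Lemma bounded_down_ind (T : Type) (f : T -> nat) (P : T -> Prop) (N : nat) :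
  (forall x, (N < f x)%N -> P x) ->
  (forall x, (forall y, (f x < f y)%N -> P y) -> P x) ->
  forall x, P x.
Proof.
move=> top step; suff IH n x : (N - f x <= n)%N -> P x by move=> x; apply: (IH _ x).
elim: n x => [|n IH] x hx; apply: step => y hy.
  by apply: top; apply: leq_trans hy; rewrite -subn_eq0 -leqn0.
case: (leqP (f y) N) => [hyN|]; last exact: top.
by apply: IH; rewrite -ltnS (leq_trans _ hx) // ltn_sub2l // (leq_trans hy).
Qed.

Lemma sum_rshift (R : nmodType) (m n : nat) (f : 'I_(m + n) -> R) :
  \sum_(q < m + n | (m <= q)%N) f q = \sum_(r < n) f (rshift m r).
Proof.
rewrite big_split_ord /= big_pred0 ?add0r; last by move=> r; rewrite /= leqNgt ltn_ord.
by apply: eq_bigl => r; rewrite /= leq_addr.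
Qed.

Lemma free_span_annihilator (F : fieldType) (n : nat) (G : {pred 'rV[F]_n})
    (e : 'cV[F]_n) :
  (exists B : 'M[F]_n, (forall i, row i B \in G) /\ row_free B) ->
  (forall a, a \in G -> a *m e = 0) -> e = 0.
Proof.
case=> B [BG Bfree] He.
have BE : B *m e = 0 by apply/row_matrixP => i; rewrite row0 row_mul He.
have uB : B \in unitmx by rewrite -row_free_unit.
by rewrite -(mulKmx uB e) BE mulmx0.
Qed.

Section Centralizer.
Variables (F : fieldType) (l1 l2 l3 : nat).
Local Notation L := (l1 + (l2 + l3))%N.
Local Notation rowG := 'rV[F]_(l2 + l3).
Local Notation multi := (multi l1 l2 l3).
Local Notation keyA := (keyA F l1 l2 l3).
Local Notation keyW := (keyW F l1 l2 l3).
Local Notation termA := (termA F l1 l2 l3).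
Local Notation termW := (termW F l1 l2 l3).
Local Notation coefW := (@coefW F l1 l2 l3).
Local Notation extG := (@extG F l1 l2 l3).
Local Notation zerom := (@zerom l1 l2 l3).
Local Notation unitm := (@unitm l1 l2 l3).
Local Notation box := (@box l1 l2 l3).
Local Notation binm := (@binm l1 l2 l3).
Local Notation mulA := (@Defs.mulA F l1 l2 l3).

Lemma coefW_cat (s1 s2 : seq termW) k : coefW (s1 ++ s2) k = coefW s1 k + coefW s2 k.
Proof. by rewrite /Defs.coefW big_cat. Qed.

Lemma coefW_flatten (ss : seq (seq termW)) k :
  coefW (flatten ss) k = \sum_(s <- ss) coefW s k.
Proof. by rewrite /Defs.coefW big_flatten. Qed.

Lemma coefW_opp (s : seq termW) k :
  coefW [seq (- t.1, t.2) | t : termW <- s] k = - coefW s k.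
Proof. by rewrite /Defs.coefW big_map sumrN. Qed.

Lemma coefW_notin_keys (u : seq termW) k :
  k \notin [seq t.2 | t <- u] -> coefW u k = 0.
Proof.
move=> ku; rewrite /Defs.coefW big1_seq // => t /andP [/eqP tk tu].
by move: ku; rewrite -tk map_f.
Qed.

Lemma sum_terms_by_key (u : seq termW) (g : keyW -> F) (K : seq keyW) :
  uniq K -> {subset [seq t.2 | t <- u] <= K} ->
  \sum_(t <- u) t.1 * g t.2 = \sum_(k <- K) coefW u k * g k.
Proof.
move=> uK uKsub.
transitivity (\sum_(k <- K) \sum_(t <- u) (if t.2 == k then t.1 * g t.2 else 0)).
  rewrite exchange_big; apply: eq_big_seq => t tu /=.
  by rewrite sum_if_eq_seq // uKsub ?map_f.
apply: eq_big_seq => k _; rewrite /Defs.coefW mulr_suml [RHS]big_mkcond.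
by apply: eq_bigr => t _; case: eqP => [->|]; rewrite ?mul0r.
Qed.

Definition weightA (W : seq termA) : F := \sum_(w <- W) w.1.
Definition keyedA (ka : keyA) (W : seq termA) := all (fun w : termA => w.2 == ka) W.

Lemma coefW_keyedA (W : seq termA) ka b m k : keyedA ka W ->
  coefW [seq (b * w.1, (w.2, m)) | w : termA <- W] k =
  ((ka, m) == k)%:R * (b * weightA W).
Proof.
move=> hW; rewrite /Defs.coefW big_map /weightA big_mkcond !mulr_sumr.
apply: eq_big_seq => w wW /=.
have /eqP -> : w.2 == ka by move/allP: hW => /(_ w wW).
by case: eqP => _; rewrite ?mul1r ?mul0r.
Qed.

Lemma mulA_keyedA c (ka : keyA) (W : seq termA) kb : keyedA kb W ->
  keyedA (ka.1 + kb.1, addm ka.2 kb.2) (mulA [:: (c, ka)] W) /\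
  weightA (mulA [:: (c, ka)] W) = c * weightA W.
Proof.
move=> hW; rewrite /Defs.mulA /= cats0; split.
  apply/allP => t /mapP [w wW ->] /=.
  by have /eqP -> : w.2 == kb by move/allP: hW => /(_ w wW).
by rewrite /weightA big_map mulr_sumr.
Qed.

Lemma sub0m (m : multi) : subm zerom m = zerom.
Proof. by apply/ffunP => q; rewrite !ffunE sub0n. Qed.

Lemma subm0 (m : multi) : subm m zerom = m.
Proof. by apply/ffunP => q; rewrite !ffunE subn0. Qed.

Lemma addm0 (m : multi) : addm m zerom = m.
Proof. by apply/ffunP => q; rewrite !ffunE addn0. Qed.

Lemma add0m (m : multi) : addm zerom m = m.
Proof. by apply/ffunP => q; rewrite !ffunE. Qed.

Lemma dA_xpow (a : rowG) p (W : seq termA) : keyedA (a, zerom) W ->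
  keyedA (a, zerom) (dA p W) /\ weightA (dA p W) = weightA W * extG a p.
Proof.
move=> hW; have key t : t \in W -> t.2 = (a, zerom).
  by move=> tW; apply/eqP; move/allP: hW => /(_ t tW).
split.
  apply/allP => t /flattenP [s /mapP [w wW ->]]; rewrite (key w wW) /=.
  by rewrite !inE sub0m => /orP [] /eqP -> /=.
rewrite /weightA big_flatten big_map mulr_suml /=; apply: eq_big_seq => w wW.
by rewrite (key w wW) !big_cons big_nil /= ffunE mulr0 !addr0.
Qed.

(* alpha^lam, so that d^lam x^alpha = alpha^lam x^alpha. *)
Definition monom (a : rowG) (lam : multi) : F :=
  \prod_(p <- enum 'I_L) extG a p ^+ lam p.

Lemma dpow_xpow (a : rowG) (lam : multi) (W : seq termA) :
  keyedA (a, zerom) W ->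
  keyedA (a, zerom) (dpow lam W) /\ weightA (dpow lam W) = weightA W * monom a lam.
Proof.
move=> hW; rewrite /dpow /monom; elim: (enum 'I_L) => [|p r [IH1 IH2]] /=.
  by rewrite big_nil mulr1.
rewrite big_cons; set b := foldr _ _ _ in IH1 IH2 *.
suff [h1 h2] : keyedA (a, zerom) (iter (lam p) (dA p) b) /\
   weightA (iter (lam p) (dA p) b) = weightA b * extG a p ^+ lam p.
  by rewrite h2 IH2 -mulrA [_ * extG _ _ ^+ _]mulrC.
elim: (lam p) => [|n [IH3 IH4]] /=; first by rewrite mulr1.
have [h1 h2] := dA_xpow p IH3; by rewrite h2 IH4 exprS -mulrA [_ * extG _ _]mulrC.
Qed.

Lemma dpow0 (W : seq termA) : dpow zerom W = W.
Proof. by rewrite /dpow; elim: (enum 'I_L) => //= p r ->; rewrite ffunE. Qed.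

Definition lem (lam mu : multi) := [forall p, lam p <= mu p]%N.

Lemma box_uniq (mu : multi) : uniq (box mu).
Proof.
rewrite /Defs.box filter_uniq // map_inj_uniq ?enum_uniq //.
move=> t1 t2 /ffunP h; apply/ffunP => p; apply: val_inj.
by have := h p; rewrite !ffunE.
Qed.

Lemma mem_box (mu lam : multi) : (lam \in box mu) = lem lam mu.
Proof.
rewrite /Defs.box mem_filter /lem; case: forallP => //= h.
apply/mapP; exists [ffun p => inord (lam p)]; first by rewrite mem_enum.
apply/ffunP => p; rewrite !ffunE inordK // ltnS.
by apply: leq_trans (h p) _; apply: (leq_bigmax_cond (F := fun p => mu p)).
Qed.

Lemma zerom_in_box (mu : multi) : zerom \in box mu.
Proof. by rewrite mem_box; apply/forallP => p; rewrite ffunE. Qed.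

Lemma big_box0 (f : multi -> F) : \sum_(lam <- box zerom) f lam = f zerom.
Proof.
rewrite (perm_big [:: zerom]) ?big_seq1 //.
apply: uniq_perm; rewrite ?box_uniq // => lam; rewrite mem_box inE /lem.
apply/forallP/eqP => [h|->]; last by move=> p; rewrite ffunE.
by apply/ffunP => p; have := h p; rewrite !ffunE leqn0 => /eqP.
Qed.

Lemma binm0 (m : multi) : binm m zerom = 1%N.
Proof. by rewrite /Defs.binm big1 // => p _; rewrite ffunE bin0. Qed.

Lemma binm_unitm (mu : multi) q : binm mu (unitm q) = mu q.
Proof.
rewrite /Defs.binm (bigD1 q) //= ffunE eqxx bin1 big1 ?muln1 // => r rq.
by rewrite ffunE (negPf rq) bin0.
Qed.

Lemma monom0 a : monom a zerom = 1.
Proof. by rewrite /monom big1 // => p _; rewrite ffunE expr0. Qed.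

Lemma monom_unitm a q : monom a (unitm q) = extG a q.
Proof.
rewrite /monom (bigD1_seq q) ?mem_enum ?enum_uniq //= ffunE eqxx expr1.
by rewrite big1 ?mulr1 // => r rq; rewrite ffunE (negPf rq) expr0.
Qed.

Lemma monom_eq0 a (lam : multi) p : (0 < lam p)%N -> extG a p = 0 -> monom a lam = 0.
Proof.
move=> h1 h2; rewrite /monom (bigD1_seq p) ?mem_enum ?enum_uniq //=.
by rewrite h2 expr0n eqn0Ngt h1 mul0r.
Qed.

Lemma extG_lshift a (p : 'I_L) : (p < l1)%N -> extG a p = 0.
Proof.
move=> h; have -> : p = lshift (l2 + l3) (Ordinal h) by apply: val_inj.
by rewrite /Defs.extG row_mxEl mxE.
Qed.

Lemma extG_rshift a (r : 'I_(l2 + l3)) : extG a (rshift l1 r) = a 0 r.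
Proof. by rewrite /Defs.extG row_mxEr. Qed.

Lemma multi_neq0 (lam : multi) : lam != zerom -> exists p, (0 < lam p)%N.
Proof.
move=> h; case: (boolP [exists p, 0 < lam p]%N) => [/existsP //|/existsPn h2].
by case/eqP: h; apply/ffunP => p; have := h2 p; rewrite ffunE lt0n negbK => /eqP.
Qed.

(* Coefficient at [k] of the [lam]-summand of [x^kk * x^a] in the product formula. *)
Definition mulx_coef (a : rowG) (k kk : keyW) (lam : multi) : F :=
  (k == ((kk.1.1 + a, kk.1.2), subm kk.2 lam))%:R * ((binm kk.2 lam)%:R * monom a lam).

(* The [lam = 0] summand cancels against [x^a * x^kk] in the commutator. *)
Definition brx_coef (a : rowG) (k kk : keyW) : F :=
  \sum_(lam <- box kk.2 | lam != zerom) mulx_coef a k kk lam.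

Lemma coefW_mulW_xpow (u : seq termW) a k :
  coefW (mulW u (xpow l1 a)) k =
  \sum_(t <- u) t.1 * \sum_(lam <- box t.2.2) mulx_coef a k t.2 lam.
Proof.
rewrite /mulW coefW_flatten big_flatten /= big_flatten big_map.
apply: eq_bigr => t _; rewrite big_seq1 big_map mulr_sumr.
apply: eq_bigr => lam _.
have hx : keyedA (a, zerom) [:: (1 : F, (a, zerom))] by rewrite /keyedA /= eqxx.
have [hk hw] := dpow_xpow lam hx.
have [hk2 hw2] := mulA_keyedA t.1 t.2.1 hk.
rewrite (coefW_keyedA _ _ _ hk2) hw2 hw /weightA big_seq1 /= !addm0 /mulx_coef.
rewrite eq_sym mul1r; ring.
Qed.

Lemma coefW_xpow_mulW (u : seq termW) a k :
  coefW (mulW (xpow l1 a) u) k =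
  \sum_(t <- u) t.1 * (k == ((a + t.2.1.1, t.2.1.2), t.2.2))%:R.
Proof.
rewrite /mulW coefW_flatten big_flatten /= cats0 big_map.
apply: eq_bigr => t _; rewrite big_map big_box0 dpow0 binm0 subm0 add0m /Defs.mulA /=.
rewrite /Defs.coefW big_mkcond big_seq1 /= add0m !mul1r eq_sym.
by case: eqP; rewrite ?mulr1 ?mulr0.
Qed.

Lemma coefW_brW_xpow (u : seq termW) a k :
  coefW (brW u (xpow l1 a)) k = \sum_(t <- u) t.1 * brx_coef a k t.2.
Proof.
rewrite /brW coefW_cat coefW_opp coefW_mulW_xpow coefW_xpow_mulW -sumrB.
apply: eq_bigr => t _; rewrite -mulrBr; congr (_ * _).
rewrite (bigD1_seq zerom) ?box_uniq ?zerom_in_box //.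
by rewrite /mulx_coef /brx_coef binm0 monom0 subm0 mulr1 addrC [a + _]addrC mulr1 addKr.
Qed.

Lemma coefW_brW_xpow_eq (u v : seq termW) a k :
  (forall k', coefW u k' = coefW v k') ->
  coefW (brW u (xpow l1 a)) k = coefW (brW v (xpow l1 a)) k.
Proof.
move=> uv; set K := undup ([seq t.2 | t <- u] ++ [seq t.2 | t <- v]).
have uK : uniq K by apply: undup_uniq.
rewrite !coefW_brW_xpow !(sum_terms_by_key _ uK) => [|kk|kk]; rewrite ?mem_undup ?mem_cat.
- by apply: eq_bigr => kk _; rewrite uv.
- by move=> ->; rewrite orbT.
- by move=> ->.
Qed.

Lemma brx_coef_D1 a k (kk : keyW) :
  [forall p : 'I_L, (l1 <= p)%N ==> (kk.2 p == 0%N)] -> brx_coef a k kk = 0.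
Proof.
move=> /forallP kkD1; rewrite /brx_coef big1_seq // => lam /andP [lam0].
rewrite mem_box => /forallP lam_le; have [p lam_p] := multi_neq0 lam0.
rewrite /mulx_coef (@monom_eq0 a lam p) ?mulr0 //; apply: extG_lshift.
rewrite ltnNge; apply/negP => l1p; move: (kkD1 p) (lam_le p) lam_p.
by rewrite l1p => /eqP ->; rewrite leqn0 => /eqP ->.
Qed.

Definition deg (m : multi) : nat := (\sum_(p < L | l1 <= p) m p)%N.

Lemma deg_eq0 (m : multi) :
  (deg m == 0%N) = [forall p : 'I_L, (l1 <= p)%N ==> (m p == 0%N)].
Proof. by rewrite /deg sum_nat_eq0. Qed.

Lemma deg_addm (m n : multi) : deg (addm m n) = (deg m + deg n)%N.
Proof. by rewrite /deg -big_split; apply: eq_bigr => p _; rewrite ffunE. Qed.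

Lemma deg_unitm (p : 'I_L) : (l1 <= p)%N -> deg (unitm p) = 1%N.
Proof.
move=> l1p; rewrite /deg (bigD1 p) //= ffunE eqxx big1 // => q /andP [_ qp].
by rewrite ffunE (negPf qp).
Qed.

Lemma leq_deg (m : multi) (q : 'I_L) : (l1 <= q)%N -> (m q <= deg m)%N.
Proof. by move=> l1q; rewrite /deg (bigD1 q) //= leq_addr. Qed.

Lemma leq_deg2 (m : multi) (q r : 'I_L) : (l1 <= q)%N -> (l1 <= r)%N -> r != q ->
  (m q + m r <= deg m)%N.
Proof.
move=> l1q l1r rq; rewrite /deg (bigD1 q) //= (bigD1 r) /=; last by rewrite l1r rq.
by rewrite leq_add2l leq_addr.
Qed.

Lemma unitm_inj : injective unitm.
Proof. by move=> q r /ffunP /(_ r); rewrite !ffunE eqxx; case: eqP. Qed.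

Lemma unitm_of_deg1 (d : multi) :
  d != zerom -> (forall r : 'I_L, (r < l1)%N -> d r = 0%N) -> (deg d <= 1)%N ->
  exists2 q : 'I_L, (l1 <= q)%N & d = unitm q.
Proof.
move=> d0 dD1 d1; have [q dq] := multi_neq0 d0.
have l1q : (l1 <= q)%N by rewrite leqNgt; apply/negP => /dD1 dq0; rewrite dq0 in dq.
have dq1 : d q = 1%N by apply/eqP; rewrite eqn_leq dq (leq_trans (leq_deg d l1q)).
exists q => //; apply/ffunP => r; rewrite ffunE; case: eqP => [->//|/eqP rq].
case: (leqP l1 r) => [l1r|]; last exact: dD1.
have := leq_trans (leq_deg2 d l1q l1r rq) d1; rewrite dq1.
by rewrite -[X in (_ <= X)%N]addn0 leq_add2l leqn0 => /eqP.
Qed.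

Lemma addm_subm (mu nu : multi) : lem nu mu -> mu = addm nu (subm mu nu).
Proof. by move=> /forallP h; apply/ffunP => p; rewrite !ffunE subnKC. Qed.

Lemma eq_subm (nu mu lam : multi) : lem lam mu ->
  (nu == subm mu lam) = (lem nu mu && (lam == subm mu nu)).
Proof.
move=> /forallP h; apply/eqP/andP => [->|[/forallP h1 /eqP ->]].
  split; first by apply/forallP => p; rewrite ffunE leq_subr.
  by apply/eqP/ffunP => p; rewrite !ffunE subKn.
by apply/ffunP => p; rewrite !ffunE subKn.
Qed.

Lemma eq_addm_unitm (mu nu : multi) q :
  (mu == addm nu (unitm q)) = lem nu mu && (subm mu nu == unitm q).
Proof.
apply/eqP/andP => [->|[/addm_subm {2}-> /eqP ->//]].
split; first by apply/forallP => p; rewrite ffunE leq_addr.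
by apply/eqP/ffunP => r; rewrite !ffunE addKn.
Qed.

Lemma brx_coef_diag a (kk : keyW) (nu : multi) :
  brx_coef a ((kk.1.1 + a, kk.1.2), nu) kk =
  if lem nu kk.2 && (subm kk.2 nu != zerom) then
    (binm kk.2 (subm kk.2 nu))%:R * monom a (subm kk.2 nu) else 0.
Proof.
set d := subm kk.2 nu; rewrite /brx_coef big_mkcond.
transitivity (\sum_(lam <- box kk.2) (if d == lam then
  (if lem nu kk.2 && (d != zerom) then (binm kk.2 d)%:R * monom a d else 0) else 0)).
  apply: eq_big_seq => lam; rewrite mem_box => hl; rewrite /mulx_coef /=.
  rewrite !xpair_eqE !eqxx /= (eq_subm nu hl).
  case: (d =P lam) => [<-|ne]; first by rewrite eqxx andbT; case: ifP; case: (lem _ _) => /=;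
    rewrite ?mul1r ?mul0r.
  have -> : (lam == d) = false by apply/eqP => e; apply: ne.
  by rewrite andbF mul0r; case: ifP.
rewrite sum_if_eq_seq ?box_uniq // mem_box; case: ifP => // /negP []; apply/forallP => p.
by rewrite ffunE leq_subr.
Qed.

Lemma brx_coef_off a (be : rowG) (j nu : multi) (kk : keyW) :
  kk.1 != (be, j) -> brx_coef a ((be + a, j), nu) kk = 0.
Proof.
move=> kk1; rewrite /brx_coef big1_seq // => lam _; rewrite /mulx_coef !xpair_eqE.
case: kk kk1 => [[be' j'] mu'] /=; rewrite xpair_eqE (can_eq (addrK a)).
by rewrite [be == _]eq_sym [j == _]eq_sym => /negPf ->; rewrite mul0r.
Qed.

Lemma brx_coef_shift a (be : rowG) (j nu mu : multi) :
  (deg mu <= (deg nu).+1)%N ->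
  brx_coef a ((be + a, j), nu) ((be, j), mu) =
  \sum_(q < L | (l1 <= q)%N) (mu == addm nu (unitm q))%:R * ((nu q).+1%:R * extG a q).
Proof.
move=> deg_mu; have := brx_coef_diag a ((be, j), mu) nu; rewrite /= => ->.
under eq_bigr => q _ do rewrite eq_addm_unitm.
case: (boolP (lem nu mu)) => /= [nu_mu|]; last by rewrite big1 // => q _; rewrite mul0r.
set d := subm mu nu.
have deg_d : (deg d <= 1)%N.
  by move: deg_mu; rewrite {1}(addm_subm nu_mu) deg_addm -addn1 leq_add2l.
case: (boolP [exists q : 'I_L, (l1 <= q)%N && (d == unitm q)]).
  case/existsP => q /andP [l1q /eqP dq].
  rewrite (bigD1 q) //= dq eqxx mul1r big1 ?addr0; last first.
    by move=> r /andP [_ rq]; rewrite (inj_eq unitm_inj) eq_sym (negPf rq) mul0r.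
  have -> : unitm q != zerom by apply/eqP => /ffunP /(_ q); rewrite !ffunE eqxx.
  rewrite binm_unitm monom_unitm {1}(addm_subm nu_mu) -/d dq !ffunE eqxx.
  by rewrite addn1.
move=> /existsPn no_unit; rewrite big1; last first.
  by move=> q l1q; move: (no_unit q); rewrite l1q /= => /negPf ->; rewrite mul0r.
case: ifP => // d0.
case: (boolP [exists r : 'I_L, (r < l1)%N && (0 < d r)%N]).
  by case/existsP => r /andP [rl1 dr]; rewrite (monom_eq0 dr (extG_lshift a rl1)) mulr0.
move=> /existsPn dD1; have [|q l1q dq] := unitm_of_deg1 d0 _ deg_d.
  by move=> r rl1; move: (dD1 r); rewrite rl1 /= lt0n negbK => /eqP.
by move: (no_unit q); rewrite l1q dq eqxx.
Qed.

(* Below the top order only the summands with [lam = 1_q] survive. *)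
Lemma coefW_brW_xpow_top (u : seq termW) a (be : rowG) (j nu : multi) :
  (forall kk, ((deg nu).+1 < deg kk.2)%N -> coefW u kk = 0) ->
  coefW (brW u (xpow l1 a)) ((be + a, j), nu) =
  \sum_(q < L | (l1 <= q)%N)
    coefW u ((be, j), addm nu (unitm q)) * ((nu q).+1%:R * extG a q).
Proof.
move=> top; set K := undup [seq t.2 | t <- u]; have uK : uniq K := undup_uniq _.
rewrite coefW_brW_xpow (sum_terms_by_key _ uK); last by move=> kk; rewrite mem_undup.
transitivity (\sum_(kk <- K) \sum_(q < L | (l1 <= q)%N)
    (kk == ((be, j), addm nu (unitm q)))%:R * (coefW u kk * ((nu q).+1%:R * extG a q))).
  apply: eq_bigr => -[[be' j'] mu] _.
  case: (eqVneq (coefW u ((be', j'), mu)) 0) => [->|c0].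
    by rewrite mul0r big1 // => q _; rewrite mul0r mulr0.
  have deg_mu : (deg mu <= (deg nu).+1)%N.
    by rewrite leqNgt; apply: contraNN c0 => lt; rewrite (top ((be', j'), mu)).
  case: (eqVneq (be', j') (be, j)) => [[-> ->]|kk1].
    rewrite brx_coef_shift // mulr_sumr; apply: eq_bigr => q _.
    by rewrite !xpair_eqE !eqxx /= mulrCA.
  rewrite brx_coef_off // mulr0 big1 // => q _.
  by rewrite xpair_eqE (negPf kk1) mul0r.
rewrite exchange_big; apply: eq_bigr => q _ /=.
set x := ((be, j), addm nu (unitm q)).
transitivity (\sum_(kk <- K) (if x == kk then coefW u x * ((nu q).+1%:R * extG a q) else 0)).
  by apply: eq_bigr => kk _; rewrite eq_sym; case: eqP => [->|]; rewrite ?mul1r ?mul0r.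
rewrite sum_if_eq_seq //; case: ifP => // /negbT.
by rewrite mem_undup => /coefW_notin_keys ->; rewrite mul0r.
Qed.

Lemma coefW_centralizer_top (G : {pred rowG}) (u : seq termW) (kk : keyW) :
  [pchar F] =i pred0 ->
  (exists B : 'M[F]_(l2 + l3), (forall i, row i B \in G) /\ row_free B) ->
  (forall a, a \in G -> forall k, coefW (brW u (xpow l1 a)) k = 0) ->
  (0 < deg kk.2)%N -> (forall kk', (deg kk.2 < deg kk'.2)%N -> coefW u kk' = 0) ->
  coefW u kk = 0.
Proof.
move=> char0 Gfree cent; case: kk => [[be j] mu] /= deg_mu top.
have [p /andP [l1p mu_p]] : exists p : 'I_L, (l1 <= p)%N && (0 < mu p)%N.
  apply/existsP; apply: contraTT deg_mu => /existsPn no_p.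
  rewrite -leqNgt leqn0 deg_eq0; apply/forallP => q.
  by have := no_p q; case: (l1 <= q)%N => //=; rewrite lt0n negbK.
set nu := subm mu (unitm p).
have mu_nu : mu = addm nu (unitm p).
  apply/ffunP => r; rewrite !ffunE; case: eqP => [->|]; last by rewrite subn0 addn0.
  by rewrite subnK.
have deg_nu : deg mu = (deg nu).+1 by rewrite {1}mu_nu deg_addm deg_unitm // addn1.
set e : 'cV[F]_(l2 + l3) := \col_r
  (coefW u ((be, j), addm nu (unitm (rshift l1 r))) * (nu (rshift l1 r)).+1%:R).
have e0 : e = 0.
  apply: free_span_annihilator Gfree _ => a aG; apply/matrixP => i k.
  rewrite [i]ord1 [k]ord1 !mxE -[RHS](cent a aG ((be + a, j), nu)).
  rewrite coefW_brW_xpow_top => [|kk]; last by rewrite -deg_nu => /top.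
  rewrite sum_rshift; apply: eq_bigr => r _.
  by rewrite !mxE extG_rshift mulrC mulrA.
have r0_lt : (p - l1 < l2 + l3)%N by rewrite ltn_subLR // ltn_ord.
have r0_p : rshift l1 (Ordinal r0_lt) = p by apply: val_inj; rewrite /= subnKC.
move/matrixP: e0 => /(_ (Ordinal r0_lt) 0); rewrite !mxE r0_p -mu_nu => /eqP.
by rewrite mulf_eq0 => /orP [/eqP //|]; move/pcharf0P: char0 => ->.
Qed.

Lemma coefW_centralizer_deg (G : {pred rowG}) (u : seq termW) :
  [pchar F] =i pred0 ->
  (exists B : 'M[F]_(l2 + l3), (forall i, row i B \in G) /\ row_free B) ->
  (forall a, a \in G -> forall k, coefW (brW u (xpow l1 a)) k = 0) ->
  forall kk, (0 < deg kk.2)%N -> coefW u kk = 0.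
Proof.
move=> char0 Gfree cent.
apply: (@bounded_down_ind _ (fun kk : keyW => deg kk.2) _ (\max_(t <- u) deg t.2.2)).
  move=> kk deg_kk _; apply: coefW_notin_keys; apply: contraTN deg_kk => /mapP [t tu ->].
  by rewrite -leqNgt (leq_bigmax_seq (F := fun t : termW => deg t.2.2)).
move=> kk IH deg_kk; apply: (coefW_centralizer_top char0 Gfree cent) => // kk' lt.
exact: IH lt (leq_ltn_trans _ lt).
Qed.

End Centralizer.

Theorem mainTheorem4 (F : fieldType) (l1 l2 l3 : nat)
    (G : {pred 'rV[F]_(l2 + l3)}) :
  [pchar F] =i pred0 ->
  (0 < l1 + (l2 + l3))%N ->
  0 \in G ->
  (forall a b, a \in G -> b \in G -> a - b \in G) ->
  (exists B : 'M[F]_(l2 + l3), (forall i, row i B \in G) /\ row_free B) ->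
  forall u : seq (termW F l1 l2 l3), inW G u ->
    ((forall a, a \in G -> forall k, coefW (brW u (xpow l1 a)) k = 0) <->
     (exists v : seq (termW F l1 l2 l3), inAD1 G v /\ forall k, coefW u k = coefW v k)).
Proof.
move=> char0 _ _ _ Gfree u uW; split => [cent|[v [vD1 uv]] a aG k].
  pose D1 (t : termW F l1 l2 l3) :=
    [forall p : 'I_(l1 + (l2 + l3)), (l1 <= p)%N ==> (t.2.2 p == 0%N)].
  exists (filter D1 u); split.
    by apply/allP => t; rewrite mem_filter => /andP [D1t /(allP uW) ->].
  move=> k; rewrite /coefW big_filter_cond.
  case: (boolP [forall p : 'I_(l1 + (l2 + l3)), (l1 <= p)%N ==> (k.2 p == 0%N)]) => kD1.
    by apply: eq_bigl => t; rewrite /D1; case: eqP => [->|]; rewrite ?andbF ?andbT.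
  rewrite [RHS]big1; last by move=> t /andP [D1t /eqP tk]; case/negP: kD1; rewrite -tk.
  by apply: (coefW_centralizer_deg char0 Gfree cent); rewrite lt0n deg_eq0.
rewrite (coefW_brW_xpow_eq _ _ uv) coefW_brW_xpow big1_seq // => t /andP [_ tv].
by have /andP [_ tD1] := allP vD1 t tv; rewrite brx_coef_D1 ?mulr0.
Qed.
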